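(* Let $\mathcal{S}$ be a state space, let $\mathcal{T}$ be a subset of the set of measurements on $\mathcal{S}$, and let $\mathsf{M}^{(1)},\mathsf{M}^{(2)}$ be measurements on $\mathcal{S}$ with $m_1$ and $m_2$ outcomes respectively, which have a joint measurement belonging to $\mathcal{T}$. Then $$\bar P(\mathsf{M}^{(1)},\mathsf{M}^{(2)})\le\frac12\Big(1+\frac{\lambda_{max}(\mathcal{T})}{m_1m_2}\Big).$$ In particular, if $\lambda_{max}(\mathcal{T})=m_1=m_2=d$, the right-hand side equals $\frac12(1+\frac1d)$.
   Context: General probabilistic theory setting: a state space $\mathcal{S}$ is a compact convex subset of a finite-dimensional real vector space, embedded as a base of a closed generating proper cone in a vector space $V$, with unit effect $u$. Effects are linear functionals $e$ on $V$ with $0\le e\le1$ on $\mathcal{S}$; $\|f\|=\max_{s\in\mathcal{S}}|f(s)|$. A measurement with finite outcome set $\Omega$ is a map $x\mapsto\mathsf{M}_x$ to effects with $\sum_x\mathsf{M}_x=u$; its decoding power is $\lambda_{max}(\mathsf{M})=\sum_x\|\mathsf{M}_x\|$, and for a set $\mathcal{T}$ of measurements $\lambda_{max}(\mathcal{T})=\sup_{\mathsf{M}\in\mathcal{T}}\lambda_{max}(\mathsf{M})$. A joint measurement of $\mathsf{M}^{(1)}$ (outcomes $\Omega_1$) and $\mathsf{M}^{(2)}$ (outcomes $\Omega_2$) is a measurement $\mathsf{J}$ with outcome set $\Omega_1\times\Omega_2$ such that $\sum_{y}\mathsf{J}_{x,y}=\mathsf{M}^{(1)}_x$ and $\sum_x\mathsf{J}_{x,y}=\mathsf{M}^{(2)}_y$.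 The random access test success probability is $\bar P(\mathsf{M}^{(1)},\mathsf{M}^{(2)})=\frac{1}{2m_1m_2}\sum_{x\in\Omega_1,y\in\Omega_2}\|\mathsf{M}^{(1)}_x+\mathsf{M}^{(2)}_y\|$. *)

From HB Require Import structures.
From mathcomp Require Import all_boot all_order all_algebra.
From mathcomp Require Import all_classical all_reals all_analysis.
Set Implicit Arguments. Unset Strict Implicit. Unset Printing Implicit Defensive.
Import Order.TTheory GRing.Theory Num.Theory.
Import numFieldNormedType.Exports.
Local Open Scope classical_set_scope.
Local Open Scope ring_scope.

(* The ambient finite-dimensional real vector space V is 'rV[R]_n.
   Linear functionals on V are represented by row vectors f : 'rV[R]_n,
   acting by the standard pairing [ev f x] = sum_i f_i x_i. *)
Definition ev (R : realType) (n : nat) (f x : 'rV[R]_n) : R :=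
  \sum_(i < n) f 0 i * x 0 i.

Definition cone_of (R : realType) (n : nat) (S : set 'rV[R]_n) : set 'rV[R]_n :=
  [set v | exists t : R, exists2 s, S s & 0 <= t /\ v = t *: s].

(* S is a state space with unit effect u: S is a nonempty compact convex set,
   which is a base (cut out by the unit effect u, i.e. u = 1 on S) of the cone
   it generates; that cone is closed, generating and proper (pointed). *)
Definition state_space (R : realType) (n : nat) (S : set 'rV[R]_n) (u : 'rV[R]_n)
  : Prop :=
  S !=set0 /\ compact S /\
  (forall x y t, S x -> S y -> 0 <= t <= 1 -> S (t *: x + (1 - t) *: y)) /\
  (forall s, S s -> ev u s = 1) /\
  closed (cone_of S) /\
  (forall v, exists a b, cone_of S a /\ cone_of S b /\ v = a - b) /\
  (forall v, cone_of S v -> cone_of S (- v) -> v = 0).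

(* ||f|| = max_{s in S} |f(s)| (S is compact, so this sup is attained) *)
Definition fnorm (R : realType) (n : nat) (S : set 'rV[R]_n) (f : 'rV[R]_n) : R :=
  sup [set `|ev f s| | s in S].

Definition is_effect (R : realType) (n : nat) (S : set 'rV[R]_n) (e : 'rV[R]_n) :=
  forall s, S s -> 0 <= ev e s <= 1.

Definition is_measurement (R : realType) (n : nat) (S : set 'rV[R]_n)
  (u : 'rV[R]_n) (Omega : finType) (M : Omega -> 'rV[R]_n) : Prop :=
  (forall x, is_effect S (M x)) /\ \sum_(x : Omega) M x = u.

Definition lam_max (R : realType) (n : nat) (S : set 'rV[R]_n)
  (Omega : finType) (M : Omega -> 'rV[R]_n) : R :=
  \sum_(x : Omega) fnorm S (M x).

Definition meas_set (R : realType) (n : nat) :=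
  forall Omega : finType, (Omega -> 'rV[R]_n) -> Prop.

(* lambda_max(T) = sup over M in T (extended real: could a priori be +oo) *)
Definition lam_max_set (R : realType) (n : nat) (S : set 'rV[R]_n)
  (T : meas_set R n) : \bar R :=
  ereal_sup [set r%:E | r in
     [set r | exists Omega : finType, exists (N : Omega -> 'rV[R]_n),
               T Omega N /\ r = lam_max S N]].

Definition is_joint (R : realType) (n : nat) (S : set 'rV[R]_n) (u : 'rV[R]_n)
  (O1 O2 : finType) (M1 : O1 -> 'rV[R]_n) (M2 : O2 -> 'rV[R]_n)
  (J : (O1 * O2)%type -> 'rV[R]_n) : Prop :=
  [/\ is_measurement S u J,
      (forall x, \sum_(y : O2) J (x, y) = M1 x)
    & (forall y, \sum_(x : O1) J (x, y) = M2 y)].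

Definition Pbar (R : realType) (n : nat) (S : set 'rV[R]_n)
  (O1 O2 : finType) (M1 : O1 -> 'rV[R]_n) (M2 : O2 -> 'rV[R]_n) : R :=
  (2 * #|O1|%:R * #|O2|%:R)^-1 *
    \sum_(x : O1) \sum_(y : O2) fnorm S (M1 x + M2 y).

From HB Require Import structures.
From mathcomp Require Import all_boot all_order all_algebra.
From mathcomp Require Import all_classical all_reals all_analysis.
From mathcomp Require Import ring lra.
Set Implicit Arguments. Unset Strict Implicit.
Import Order.TTheory GRing.Theory Num.Theory.
Local Open Scope ring_scope.

(* On a state s the effects J (x, y) of a joint measurement form a probability
   table whose row and column sums are M1 x (s) and M2 y (s).  A row and a
   column of a nonnegative table with total mass 1 carry mass at most
   1 + J (x, y) (s), so |M1 x + M2 y| <= 1 + ||J (x, y)|| on the state space.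
   Summing over all (x, y) gives 2 m1 m2 Pbar <= m1 m2 + lam_max J, and
   lam_max J <= lam_max T since J belongs to T. *)

Lemma row_col_sum_le (R : numDomainType) (I J : finType) (a : I -> J -> R)
    (x : I) (y : J) :
  (forall i j, 0 <= a i j) ->
  \sum_j a x j + \sum_i a i y <= \sum_i \sum_j a i j + a x y.
Proof.
move=> a_ge0.
rewrite (bigD1 x (P := xpredT) (F := fun i => a i y)) //=.
rewrite (bigD1 x (P := xpredT) (F := fun i => \sum_j a i j)) //=.
rewrite addrCA [X in _ <= X]addrC lerD2l lerD2l.
apply: ler_sum => i _; rewrite (bigD1 y) //= lerDl.
by apply: sumr_ge0 => j _.
Qed.

Section EffectNorm.
Variables (R : realType) (n : nat) (S : set 'rV[R]_n).

Lemma evDl (f g s : 'rV[R]_n) : ev (f + g) s = ev f s + ev g s.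
Proof. by rewrite /ev -big_split; apply: eq_bigr => i _; rewrite mxE mulrDl. Qed.

Lemma ev_suml (I : finType) (F : I -> 'rV[R]_n) s :
  ev (\sum_k F k) s = \sum_k ev (F k) s.
Proof.
rewrite /ev; under eq_bigr => i _ do rewrite summxE mulr_suml.
by rewrite exchange_big.
Qed.

Lemma ev_le_fnorm (f s : 'rV[R]_n) (B : R) :
  (forall t, S t -> `|ev f t| <= B) -> S s -> `|ev f s| <= fnorm S f.
Proof.
move=> f_le_B Ss; apply: ub_le_sup; last by exists s.
by exists B => _ [t St <-]; apply: f_le_B.
Qed.

Lemma fnorm_le (f : 'rV[R]_n) (c : R) :
  (S !=set0)%classic -> (forall s, S s -> `|ev f s| <= c) -> fnorm S f <= c.
Proof.
move=> [s0 Ss0] f_le_c; apply: ge_sup; first by exists `|ev f s0|, s0.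
by move=> _ [t St <-]; apply: f_le_c.
Qed.

Lemma effect_le_fnorm (e s : 'rV[R]_n) :
  is_effect S e -> S s -> ev e s <= fnorm S e.
Proof.
move=> e_eff Ss; apply: le_trans (ler_norm _) (ev_le_fnorm (B := 1) _ Ss).
by move=> t St; have /andP[e_ge0 e_le1] := e_eff t St; rewrite ger0_norm.
Qed.

End EffectNorm.

Section JointMeasurement.
Variables (R : realType) (n : nat) (S : set 'rV[R]_n) (u : 'rV[R]_n).
Variables (O1 O2 : finType) (M1 : O1 -> 'rV[R]_n) (M2 : O2 -> 'rV[R]_n).
Variable J : (O1 * O2)%type -> 'rV[R]_n.
Hypotheses (S_neq0 : (S !=set0)%classic) (u_on_S : forall s, S s -> ev u s = 1).
Hypothesis J_joint : is_joint S u M1 M2 J.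

Lemma fnorm_marginalsD_le x y :
  fnorm S (M1 x + M2 y) <= 1 + fnorm S (J (x, y)).
Proof.
have [[J_eff J_sum] J_M1 J_M2] := J_joint.
apply: fnorm_le => // s Ss.
have J_ge0 x' y' : 0 <= ev (J (x', y')) s by have /andP[] := J_eff (x', y') s Ss.
have J_total : \sum_x' \sum_y' ev (J (x', y')) s = 1.
  by rewrite -(u_on_S Ss) -J_sum ev_suml pair_bigA; apply: eq_bigr => -[].
rewrite evDl -J_M1 -J_M2 !ev_suml ger0_norm; last first.
  by apply: addr_ge0; apply: sumr_ge0.
apply: le_trans (row_col_sum_le (a := fun i j => ev (J (i, j)) s) x y J_ge0) _.
by rewrite J_total lerD2l effect_le_fnorm.
Qed.

Lemma sum_fnorm_marginalsD_le :
  \sum_x \sum_y fnorm S (M1 x + M2 y) <= #|O1|%:R * #|O2|%:R + lam_max S J.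
Proof.
have lam_maxE : lam_max S J = \sum_x \sum_y fnorm S (J (x, y)).
  by rewrite /lam_max pair_bigA; apply: eq_bigr => -[].
apply: le_trans (_ : \sum_x \sum_y (1 + fnorm S (J (x, y))) <= _).
  by apply: ler_sum => x _; apply: ler_sum => y _; apply: fnorm_marginalsD_le.
rewrite lam_maxE mulr_natl; under eq_bigr => x _ do rewrite big_split /= sumr_const.
by rewrite big_split /= sumr_const.
Qed.

Lemma Pbar_le :
  Pbar S M1 M2 <= 2^-1 * (1 + lam_max S J * (#|O1| * #|O2|)%:R^-1).
Proof.
rewrite /Pbar -mulrA natrM; set k := #|O1|%:R * #|O2|%:R.
have [->|k_neq0] := eqVneq k 0; first by rewrite !(mulr0, invr0, mul0r, addr0); lra.
have -> : 2^-1 * (1 + lam_max S J / k) = (2 * k)^-1 * (k + lam_max S J) by field.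
by apply: ler_wpM2l; [rewrite invr_ge0 !mulr_ge0 | exact: sum_fnorm_marginalsD_le].
Qed.

End JointMeasurement.

Lemma lam_max_le_set (R : realType) (n : nat) (S : set 'rV[R]_n) (T : meas_set R n)
    (O : finType) (N : O -> 'rV[R]_n) :
  T O N -> ((lam_max S N)%:E <= lam_max_set S T)%E.
Proof. by move=> TN; apply: ereal_sup_ubound; exists (lam_max S N) => //; exists O, N. Qed.

Theorem proposition5 (R : realType) (n : nat) (S : set 'rV[R]_n) (u : 'rV[R]_n)
  (T : meas_set R n) (O1 O2 : finType)
  (M1 : O1 -> 'rV[R]_n) (M2 : O2 -> 'rV[R]_n) :
  state_space S u ->
  is_measurement S u M1 -> is_measurement S u M2 ->
  (exists J : (O1 * O2)%type -> 'rV[R]_n, is_joint S u M1 M2 J /\ T _ J) ->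
  let m1 := #|O1| in let m2 := #|O2| in
  let rhs := ((2^-1)%:E * (1 + lam_max_set S T * ((m1 * m2)%:R^-1)%:E))%E in
  ((Pbar S M1 M2)%:E <= rhs)%E /\
  (forall d : nat, lam_max_set S T = (d%:R)%:E -> m1 = d -> m2 = d ->
     rhs = (2^-1 * (1 + d%:R^-1))%:E).
Proof.
move=> [S_neq0 [_ [_ [u_on_S _]]]] _ _ [J [J_joint TJ]] m1 m2 rhs; split.
  apply: le_trans (_ : (2^-1 * (1 + lam_max S J * (m1 * m2)%:R^-1))%:E <= _)%E.
    by rewrite lee_fin; exact: Pbar_le S_neq0 u_on_S J_joint.
  rewrite /rhs EFinM EFinD EFinM; apply: lee_wpmul2l; first by rewrite lee_fin.
  apply: leeD2l; apply: lee_wpmul2r; first by rewrite lee_fin invr_ge0.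
  exact: lam_max_le_set TJ.
move=> d lam_maxE m1E m2E; rewrite /rhs lam_maxE m1E m2E -!EFinM; congr EFin.
have [->|d_neq0] := eqVneq d 0%N; first by rewrite !mul0r invr0.
by rewrite natrM invfM mulrA divff ?mul1r ?pnatr_eq0.
Qed.
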